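(* Let $p:X\to Y$ be a covering map with finite fibers and with $X$ Hausdorff. Then every open cover $\mathcal V$ of $X$ has a refinement that is a covering structure of $p$.
   Context: A covering map $p:X\to Y$ is a continuous surjection such that every point of $Y$ has an open neighborhood $V$ with $p^{-1}(V)$ a disjoint union of open sets each mapped homeomorphically onto $V$. A slice of $p$ is an open set $U\subseteq X$ such that $p^{-1}(p(U))$ is the disjoint union of a family of open sets $U_s$ ($s\in S$), each mapped by $p$ homeomorphically onto $p(U)$, with $U=U_t$ for some $t\in S$. A covering structure of $p$ is an open cover $\mathcal S$ of $X$ by slices of $p$ such that for every $U\in\mathcal S$, $p^{-1}(p(U))$ is the disjoint union of a family $\{U_j\}_{j\in J}$ of elements of $\mathcal S$, each mapped homeomorphically onto $p(U)$. A refinement of $\mathcal V$ is an open cover each of whose elements is contained in some element of $\mathcal V$. *)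

From Stdlib Require Import List.

Set Implicit Arguments.

Record topology (X : Type) := Topology {
  is_open : (X -> Prop) -> Prop;
  open_full : is_open (fun _ => True);
  open_inter : forall U V, is_open U -> is_open V -> is_open (fun x => U x /\ V x);
  open_union : forall F : (X -> Prop) -> Prop,
      (forall U, F U -> is_open U) -> is_open (fun x => exists U, F U /\ U x)
}.

Section TopDefs.
Variables (X Y : Type) (TX : topology X) (TY : topology Y).

Definition continuous (f : X -> Y) : Prop :=
  forall V, is_open TY V -> is_open TX (fun x => V (f x)).

Definition hausdorff : Prop :=
  forall x y : X, x <> y -> exists U V, is_open TX U /\ is_open TX V /\ U x /\ V y /\
    (forall z, ~ (U z /\ V z)).

Definition image (f : X -> Y) (U : X -> Prop) : Y -> Prop :=
  fun y => exists x, U x /\ f x = y.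

(* p maps U homeomorphically onto V (subspace topologies on U and V):
   p|U is a bijection U -> V, continuous, with continuous inverse. *)
Definition maps_homeo_onto (p : X -> Y) (U : X -> Prop) (V : Y -> Prop) : Prop :=
  (forall x x', U x -> U x' -> p x = p x' -> x = x') /\
  (forall y, V y <-> image p U y) /\
  (forall W, is_open TY W -> exists O, is_open TX O /\
      forall x, U x -> (W (p x) <-> O x)) /\
  (forall O, is_open TX O -> exists W, is_open TY W /\
      forall y, V y -> (image p (fun x => U x /\ O x) y <-> W y)).

Definition open_disjoint_union (A : X -> Prop) (S : Type) (Us : S -> X -> Prop) : Prop :=
  (forall s, is_open TX (Us s)) /\
  (forall x, A x <-> exists s, Us s x) /\
  (forall s t x, Us s x -> Us t x -> s = t).

Definition covering_map (p : X -> Y) : Prop :=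
  continuous p /\ (forall y, exists x, p x = y) /\
  forall y, exists V, is_open TY V /\ V y /\
    exists (S : Type) (Us : S -> X -> Prop),
      open_disjoint_union (fun x => V (p x)) Us /\
      forall s, maps_homeo_onto p (Us s) V.

Definition finite_fibers (p : X -> Y) : Prop :=
  forall y, exists l : list X, forall x, p x = y -> In x l.

Definition is_slice (p : X -> Y) (U : X -> Prop) : Prop :=
  is_open TX U /\
  exists (S : Type) (Us : S -> X -> Prop) (t : S),
    open_disjoint_union (fun x => image p U (p x)) Us /\
    (forall s, maps_homeo_onto p (Us s) (image p U)) /\
    (forall x, Us t x <-> U x).

Definition open_cover (C : (X -> Prop) -> Prop) : Prop :=
  (forall U, C U -> is_open TX U) /\ (forall x, exists U, C U /\ U x).

Definition covering_structure (p : X -> Y) (C : (X -> Prop) -> Prop) : Prop :=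
  open_cover C /\ (forall U, C U -> is_slice p U) /\
  forall U, C U -> exists (J : Type) (Uj : J -> X -> Prop),
    (forall j, C (Uj j)) /\
    open_disjoint_union (fun x => image p U (p x)) Uj /\
    (forall j, maps_homeo_onto p (Uj j) (image p U)).

Definition refinement (W Vc : (X -> Prop) -> Prop) : Prop :=
  open_cover W /\ forall U, W U -> exists V, Vc V /\ forall x, U x -> V x.

End TopDefs.

(* Two observations drive the proof:
   - shrinking: if V is evenly covered by (U_s) and W is an open subset of V,
     then W is evenly covered by the restricted sheets U_s /\ p^-1(W);
   - every sheet U_s of an evenly covered V is a slice, and the whole family of
     sheets is the decomposition of p^-1(p(U_s)) demanded of a covering structure.
   Given an open cover Vc of X and y in Y, pick an evenly covered V containing y.
   For each of the finitely many points x of the fibre over y choose A_x in Vc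
   containing x; since p is a homeomorphism on the sheet through x, the set
   p(sheet /\ A_x) is an open neighbourhood of y.  Shrinking V to the (finite)
   intersection W of these neighbourhoods makes every sheet over W lie in some
   member of Vc.  The sheets of all such "fine" evenly covered sets form the
   required covering structure. *)

From Stdlib Require Import List Classical.

Lemma open_nbhd_finite_inter (A Y : Type) (TY : topology Y) (y : Y)
  (Q : A -> (Y -> Prop) -> Prop) (l : list A) :
  (forall a, exists O, is_open TY O /\ O y /\ Q a O) ->
  exists W, is_open TY W /\ W y /\
    forall a, In a l -> exists O, Q a O /\ forall y', W y' -> O y'.
Proof.
  intros HQ. induction l as [|a l IHl].
  - exists (fun _ => True). split; [apply open_full | split; [exact I |]].
    intros a [].
  - destruct IHl as [W [HW [Wy HWl]]].
    destruct (HQ a) as [O [HO [Oy Qa]]].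
    exists (fun y' => O y' /\ W y').
    split; [apply open_inter; assumption | split; [split; assumption |]].
    intros b [<- | Hb].
    + exists O. split; [exact Qa | intros y' [H _]; exact H].
    + destruct (HWl b Hb) as [O' [Qb HO']].
      exists O'. split; [exact Qb | intros y' [_ H]; exact (HO' y' H)].
Qed.

Section Sheets.
Variables (X Y : Type) (TX : topology X) (TY : topology Y) (p : X -> Y).

Lemma homeo_target_ext (U : X -> Prop) (V V' : Y -> Prop) :
  maps_homeo_onto TX TY p U V -> (forall y, V y <-> V' y) ->
  maps_homeo_onto TX TY p U V'.
Proof.
  intros [Hinj [Him [Hcont Hopen]]] HV.
  split; [exact Hinj | split; [| split; [exact Hcont |]]].
  - intro y. rewrite <- HV. apply Him.
  - intros O HO. destruct (Hopen O HO) as [W [HW HWp]].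
    exists W. split; [exact HW |]. intros y Hy. apply HWp, HV, Hy.
Qed.

Lemma homeo_restrict (U : X -> Prop) (V W : Y -> Prop) :
  maps_homeo_onto TX TY p U V -> (forall y, W y -> V y) ->
  maps_homeo_onto TX TY p (fun z => U z /\ W (p z)) W.
Proof.
  intros [Hinj [Him [Hcont Hopen]]] HWV.
  split; [| split; [| split]].
  - intros x x' [Hx _] [Hx' _]. apply Hinj; assumption.
  - intro y. split.
    + intros Wy. destruct (proj1 (Him y) (HWV y Wy)) as [z [Uz <-]].
      exists z. auto.
    + intros [z [[_ Wz] <-]]. exact Wz.
  - intros O HO. destruct (Hcont O HO) as [O' [HO' HO'p]].
    exists O'. split; [exact HO' |]. intros x [Ux _]. auto.
  - intros O HO. destruct (Hopen O HO) as [W' [HW' HW'p]].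
    exists W'. split; [exact HW' |]. intros y Wy.
    rewrite <- (HW'p y (HWV y Wy)). split.
    + intros [z [[[Uz _] Oz] Ez]]. exists z. auto.
    + intros [z [[Uz Oz] Ez]]. exists z. subst y. auto.
Qed.

Definition evenly_covered (V : Y -> Prop) (S : Type) (Us : S -> X -> Prop) : Prop :=
  is_open TY V /\ open_disjoint_union TX (fun x => V (p x)) Us /\
  forall s, maps_homeo_onto TX TY p (Us s) V.

Lemma covering_map_evenly_covered :
  covering_map TX TY p ->
  forall y, exists V S Us, evenly_covered V S Us /\ V y.
Proof.
  intros [_ [_ Hcov]] y.
  destruct (Hcov y) as [V [HV [Vy [S [Us [HU Hh]]]]]].
  exists V, S, Us. split; [split; [exact HV | split; [exact HU | exact Hh]] | exact Vy].
Qed.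

(* Shrinking: an open subset of an evenly covered set is evenly covered by the
   restricted sheets (continuity of p keeps the restricted sheets open). *)
Lemma evenly_covered_shrink (V W : Y -> Prop) (S : Type) (Us : S -> X -> Prop) :
  continuous TX TY p -> evenly_covered V S Us ->
  is_open TY W -> (forall y, W y -> V y) ->
  evenly_covered W S (fun s z => Us s z /\ W (p z)).
Proof.
  intros Hcont [_ [[HUo [HUc HUd]] Hh]] HW HWV.
  split; [exact HW | split; [split; [| split] |]].
  - intro s. apply open_inter; [apply HUo | apply Hcont, HW].
  - intro x. split.
    + intros Wx. destruct (proj1 (HUc x) (HWV _ Wx)) as [s Hs]. exists s. auto.
    + intros [s [_ Wx]]. exact Wx.
  - intros s t x [Hs _] [Ht _]. exact (HUd s t x Hs Ht).
  - intro s. apply homeo_restrict with V; [apply Hh | exact HWV].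
Qed.

Lemma sheet_image {V : Y -> Prop} {S : Type} {Us : S -> X -> Prop} :
  evenly_covered V S Us -> forall s y, image p (Us s) y <-> V y.
Proof.
  intros [_ [_ Hh]] s y. symmetry. apply (Hh s).
Qed.

Lemma sheet_decomposition {V : Y -> Prop} {S : Type} {Us : S -> X -> Prop} (s : S) :
  evenly_covered V S Us ->
  open_disjoint_union TX (fun x => image p (Us s) (p x)) Us /\
  forall t, maps_homeo_onto TX TY p (Us t) (image p (Us s)).
Proof.
  intros HV. pose proof (sheet_image HV s) as Him.
  destruct HV as [_ [[HUo [HUc HUd]] Hh]].
  split; [split; [exact HUo | split; [| exact HUd]] |].
  - intro x. rewrite Him. apply HUc.
  - intro t. apply homeo_target_ext with V; [apply Hh |].
    intro y. symmetry. apply Him.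
Qed.

(* The part of the sheet through x lying over a small neighbourhood of p x is
   contained in a prescribed open neighbourhood A of x: take p(sheet /\ A). *)
Lemma sheet_into_open {V : Y -> Prop} {S : Type} {Us : S -> X -> Prop}
  {s : S} {x : X} {A : X -> Prop} :
  evenly_covered V S Us -> Us s x -> is_open TX A -> A x ->
  exists O, is_open TY O /\ O (p x) /\ forall z, Us s z -> O (p z) -> A z.
Proof.
  intros HV Hx HA Ax.
  pose proof (sheet_image HV s) as Him.
  destruct HV as [_ [_ Hh]].
  destruct (Hh s) as [Hinj [_ [_ Hopen]]].
  destruct (Hopen A HA) as [O [HO HOp]].
  exists O. split; [exact HO | split].
  - apply HOp; [apply Him; exists x; auto | exists x; auto].
  - intros z Hz Oz.
    assert (Vz : V (p z)) by (apply Him; exists z; auto).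
    destruct (proj2 (HOp (p z) Vz) Oz) as [z' [[Hz' Az'] Ez']].
    rewrite (Hinj z z' Hz Hz' (eq_sym Ez')). exact Az'.
Qed.

Definition fine_sheets (Vc : (X -> Prop) -> Prop) {S : Type} (Us : S -> X -> Prop) : Prop :=
  forall s, exists A, Vc A /\ forall z, Us s z -> A z.

(* Main construction: every point of Y has an evenly covered neighbourhood whose
   sheets are finer than Vc; finiteness of the fibre keeps it open. *)
Lemma fine_evenly_covered_nbhd (Vc : (X -> Prop) -> Prop) :
  continuous TX TY p -> finite_fibers p -> open_cover TX Vc ->
  (forall y, exists V S Us, evenly_covered V S Us /\ V y) ->
  forall y, exists W S Us, evenly_covered W S Us /\ W y /\ fine_sheets Vc Us.
Proof.
  intros Hcont Hfin [HVco HVcc] Hev y.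
  destruct (Hev y) as [V [S [Us [HV Vy]]]].
  pose proof (sheet_image HV) as Him.
  pose proof HV as [HVo [[_ [HUc HUd]] _]].
  assert (Hfibre : forall x, exists O, is_open TY O /\ O y /\
            (p x = y -> exists A, Vc A /\
               forall s z, Us s x -> Us s z -> O (p z) -> A z)).
  { intro x. destruct (classic (p x = y)) as [<- | Hne].
    - destruct (HVcc x) as [A [HA Ax]].
      destruct (proj1 (HUc x) Vy) as [s Hs].
      destruct (sheet_into_open HV Hs (HVco A HA) Ax) as [O [HO [Ox HOA]]].
      exists O. split; [exact HO | split; [exact Ox |]].
      intros _. exists A. split; [exact HA |].
      intros t z Ht Hz Oz. rewrite (HUd t s x Ht Hs) in Hz. exact (HOA z Hz Oz).
    - exists (fun _ => True). split; [apply open_full | split; [exact I |]].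
      intros E. contradiction. }
  destruct (Hfin y) as [l Hl].
  destruct (open_nbhd_finite_inter _ _ TY y _ l Hfibre) as [Wl [HWl [Wly HWlp]]].
  set (W := fun y' => V y' /\ Wl y').
  exists W, S, (fun s z => Us s z /\ W (p z)).
  split.
  { apply (evenly_covered_shrink V W S Us Hcont HV).
    - apply open_inter; [exact HVo | exact HWl].
    - intros y' [Vy' _]. exact Vy'. }
  split; [split; assumption |].
  intro s. destruct (proj2 (Him s y) Vy) as [x [Hxs Hxy]].
  destruct (HWlp x (Hl x Hxy)) as [O [HQ HWO]].
  destruct (HQ Hxy) as [A [HA HAp]].
  exists A. split; [exact HA |].
  intros z [Hz [_ Wz]]. exact (HAp s z Hxs Hz (HWO _ Wz)).
Qed.

Definition fine_sheet (Vc : (X -> Prop) -> Prop) (U : X -> Prop) : Prop :=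
  exists V S Us s, evenly_covered V S Us /\ fine_sheets Vc Us /\ U = Us s.

Lemma fine_sheet_open_cover (Vc : (X -> Prop) -> Prop) :
  (forall y, exists W S Us, evenly_covered W S Us /\ W y /\ fine_sheets Vc Us) ->
  open_cover TX (fine_sheet Vc).
Proof.
  intros Hfine. split.
  - intros U [V [S [Us [s [[_ [[HUo _] _]] [_ ->]]]]]]. apply HUo.
  - intro x. destruct (Hfine (p x)) as [W [S [Us [HW [Wx Hsm]]]]].
    pose proof HW as [_ [[_ [HUc _]] _]].
    destruct (proj1 (HUc x) Wx) as [s Hs].
    exists (Us s). split; [exists W, S, Us, s; auto | exact Hs].
Qed.

Lemma fine_sheet_refines (Vc : (X -> Prop) -> Prop) :
  open_cover TX (fine_sheet Vc) -> refinement TX (fine_sheet Vc) Vc.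
Proof.
  intros Hcov. split; [exact Hcov |].
  intros U [V [S [Us [s [_ [Hsm ->]]]]]]. apply Hsm.
Qed.

Lemma fine_sheet_covering_structure (Vc : (X -> Prop) -> Prop) :
  open_cover TX (fine_sheet Vc) -> covering_structure TX TY p (fine_sheet Vc).
Proof.
  intros Hcov. split; [exact Hcov | split].
  - intros U HU. split; [apply (proj1 Hcov), HU |].
    destruct HU as [V [S [Us [s [HV [_ ->]]]]]].
    destruct (sheet_decomposition s HV) as [Hdu Hh].
    exists S, Us, s. split; [exact Hdu | split; [exact Hh | tauto]].
  - intros U [V [S [Us [s [HV [Hsm ->]]]]]].
    destruct (sheet_decomposition s HV) as [Hdu Hh].
    exists S, Us. split; [| split; [exact Hdu | exact Hh]].
    intro t. exists V, S, Us, t. auto.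
Qed.

End Sheets.

Arguments fine_sheet {X Y} TX TY p Vc U.

Theorem lemma4p10 (X Y : Type) (TX : topology X) (TY : topology Y) (p : X -> Y) :
  covering_map TX TY p -> finite_fibers p -> hausdorff TX ->
  forall Vc : (X -> Prop) -> Prop, open_cover TX Vc ->
  exists C : (X -> Prop) -> Prop, refinement TX C Vc /\ covering_structure TX TY p C.
Proof.
  intros Hp Hfin _ Vc HVc.
  assert (Hcov : open_cover TX (fine_sheet TX TY p Vc)).
  { apply fine_sheet_open_cover, fine_evenly_covered_nbhd; auto.
    - apply Hp.
    - apply covering_map_evenly_covered, Hp. }
  exists (fine_sheet TX TY p Vc).
  split; [apply fine_sheet_refines | apply fine_sheet_covering_structure]; exact Hcov.
Qed.
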